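(* Assume $\sigma^2=0$, and let $g(\underline\phi)=\sum_{(l,k)}\alpha_{lk}\beta_{llk}^2\phi_{lk}^HD_l^{-1}\phi_{lk}$ with $D_l=\sum_{(i,j)}\beta_{lij}\phi_{ij}\phi_{ij}^H$, defined on the open set of pilot collections for which every $D_l$ is invertible. Let $\underline{\tilde\phi}$ be a stationary point of $g$ (unconstrained, i.e. with zero gradient) in this set with every $\tilde\phi_{lk}\neq 0$, and set $\delta=\min_{(l,k)}\sqrt{\tau P_{\max}}/\|\tilde\phi_{lk}\|$ and $\phi^\star_{lk}=\delta\tilde\phi_{lk}$ for all $(l,k)$. Then $\underline\phi^\star$ satisfies $\|\phi^\star_{lk}\|^2\le\tau P_{\max}$ for all $(l,k)$ and is a stationary (KKT) point of the problem of maximizing $g$ subject to $\|\phi_{lk}\|^2\le\tau P_{\max}$ for all $(l,k)$.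
   Context: $L$ cells indexed by $l,i$, each with $K$ users indexed by $k,j$; sums over $(i,j)$ or $(l,k)$ range over all $LK$ users. Pilot length $\tau$, power budget $P_{\max}>0$, large-scale fading coefficients $\beta_{lij}>0$, weights $\alpha_{lk}>0$, pilots $\phi_{lk}\in\mathbb C^\tau$. *)

(* Complex scalars are an arbitrary numClosedFieldType C
   (e.g. algC); real scalars are the elements x with x \is Num.real. *)
From HB Require Import structures.
From mathcomp Require Import all_boot all_order all_algebra.
Set Implicit Arguments. Unset Strict Implicit. Unset Printing Implicit Defensive.
Import Order.TTheory GRing.Theory Num.Theory.
Local Open Scope ring_scope.

Section PilotDefs.
Variable C : numClosedFieldType.

Definition herm m n (A : 'M[C]_(m, n)) : 'M[C]_(n, m) :=
  (map_mx (fun z : C => z^*) A)^T.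

Definition pilots (L K tau : nat) := 'I_L -> 'I_K -> 'cV[C]_tau.

Definition sqnorm tau (v : 'cV[C]_tau) : C := \sum_(i < tau) `|v i 0| ^+ 2.
Definition vnorm tau (v : 'cV[C]_tau) : C := sqrtC (sqnorm v).

Definition Dmat L K tau (beta : 'I_L -> 'I_L -> 'I_K -> C)
  (phi : pilots L K tau) (l : 'I_L) : 'M[C]_tau :=
  \sum_(i < L) \sum_(j < K) beta l i j *: (phi i j *m herm (phi i j)).

Definition gobj L K tau (alpha : 'I_L -> 'I_K -> C)
  (beta : 'I_L -> 'I_L -> 'I_K -> C) (phi : pilots L K tau) : C :=
  \sum_(l < L) \sum_(k < K)
     alpha l k * (beta l l k) ^+ 2 *
     (herm (phi l k) *m invmx (Dmat beta phi l) *m phi l k) 0 0.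

Definition in_domain L K tau (beta : 'I_L -> 'I_L -> 'I_K -> C)
  (phi : pilots L K tau) : Prop := forall l, Dmat beta phi l \in unitmx.

Definition padd L K tau (phi : pilots L K tau) (t : C) (V : pilots L K tau)
  : pilots L K tau := fun l k => phi l k + t *: V l k.

Definition hasderiv0 (f : C -> C) (d : C) : Prop :=
  forall e : C, 0 < e -> exists2 r : C, 0 < r &
    forall t : C, t \is Num.real -> 0 < `|t| < r ->
      `|(f t - f 0) / t - d| < e.

(* unconstrained stationary point: every (real) directional derivative is 0,
   i.e. the gradient vanishes *)
Definition stationary L K tau (G : pilots L K tau -> C) (phi : pilots L K tau)
  : Prop :=
  forall V : pilots L K tau, hasderiv0 (fun t => G (padd phi t V)) 0.

(* KKT point of  max G  s.t.  ||phi_lk||^2 <= c  for all (l,k):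
   multipliers mu_lk >= 0, complementary slackness, and stationarity of the
   Lagrangian G - sum mu_lk (||phi_lk||^2 - c) (gradient of G equals
   sum mu_lk * gradient of ||phi_lk||^2). *)
Definition KKT_point L K tau (G : pilots L K tau -> C) (c : C)
  (phi : pilots L K tau) : Prop :=
  exists mu : 'I_L -> 'I_K -> C,
    [/\ forall l k, 0 <= mu l k,
        forall l k, mu l k * (sqnorm (phi l k) - c) = 0 &
        forall V : pilots L K tau,
          hasderiv0 (fun t => G (padd phi t V)
               - \sum_(l < L) \sum_(k < K)
                   mu l k * (sqnorm (padd phi t V l k) - c)) 0].

End PilotDefs.

From Pilot Require Import Defs.
From HB Require Import structures.
From mathcomp Require Import all_boot all_order all_algebra.
From Stdlib Require Import FunctionalExtensionality.
Import Order.TTheory GRing.Theory Num.Theory.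
Local Open Scope ring_scope.

(* The objective g is invariant under a common nonzero rescaling of all the
   pilots: D_l scales by |c|^2 while each quadratic form phi^H D^-1 phi scales
   by |c|^2 / |c|^2 (lemma [gobj_scale]).  Since the invertibility domain is
   open along every real line through a point of it ([in_domain_near], proved
   by continuity of the polynomial t |-> prod_l det D_l(phi + tW) at t = 0),
   the function t |-> g(c phi + t V) agrees near 0 with t |-> g(phi + t V/c);
   derivatives at 0 only depend on values near 0 ([hasderiv0_local]), so a
   stationary point stays stationary after rescaling ([stationary_scale]).
   An unconstrained stationary point is a KKT point with zero multipliers
   ([stationary_KKT]), and the choice of delta makes the rescaled pilots
   feasible ([sqnormZ_le]). *)

Lemma hermZ (C : numClosedFieldType) m n (c : C) (A : 'M[C]_(m, n)) :
  herm (c *: A) = c^* *: herm A.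
Proof. by apply/matrixP => i j; rewrite !mxE rmorphM. Qed.

Lemma hermD (C : numClosedFieldType) m n (A B : 'M[C]_(m, n)) :
  herm (A + B) = herm A + herm B.
Proof. by apply/matrixP => i j; rewrite !mxE rmorphD. Qed.

Section RealDerivative.
Context {C : numClosedFieldType}.

Lemma common_radius {r1 r2 : C} :
  0 < r1 -> 0 < r2 -> exists2 r : C, 0 < r & r <= r1 /\ r <= r2.
Proof.
move=> r1_gt0 r2_gt0.
have /orP[le12 | le21] := real_leVge (gtr0_real r1_gt0) (gtr0_real r2_gt0).
- by exists r1.
- by exists r2.
Qed.

Lemma hasderiv0_local {f g : C -> C} {d r : C} : 0 < r ->
  (forall t, t \is Num.real -> `|t| < r -> f t = g t) ->
  hasderiv0 f d -> hasderiv0 g d.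
Proof.
move=> r_gt0 fg df e e_gt0.
have [r1 r1_gt0 hr1] := df e e_gt0.
have [r0 r0_gt0 [le_r1 le_r]] := common_radius r1_gt0 r_gt0.
exists r0 => // t t_real /andP[t_gt0 t_lt].
have [t_r1 t_r] := (lt_le_trans t_lt le_r1, lt_le_trans t_lt le_r).
rewrite -!fg ?real0 ?normr0 //; apply: hr1 => //.
by rewrite t_gt0 t_r1.
Qed.

End RealDerivative.

Lemma stationary_KKT (C : numClosedFieldType) L K tau
  (G : pilots C L K tau -> C) (c : C) (phi : pilots C L K tau) :
  stationary G phi -> KKT_point G c phi.
Proof.
move=> stat; exists (fun _ _ => 0); split=> [l k | l k | V].
- exact: lexx.
- exact: mul0r.
apply: (hasderiv0_local ltr01 _ (stat V)) => t _ _.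
rewrite big1 ?subr0 // => l _.
by rewrite big1 // => k _; rewrite mul0r.
Qed.

Lemma pow_sub0_le (R : numDomainType) (s : R) (i : nat) :
  `|s| <= 1 -> `|s ^+ i - 0 ^+ i| <= `|s|.
Proof.
move=> s_le1; case: i => [|n]; first by rewrite !expr0 subrr normr0.
rewrite expr0n /= subr0 normrX exprS.
by rewrite ler_piMr // exprn_ile1.
Qed.

(* A polynomial that does not vanish at 0 does not vanish near 0:
   |p(s) - p(0)| <= (sum_i |p_i|) |s| for |s| <= 1. *)
Lemma poly_nz_near0 (R : numFieldType) (p : {poly R}) :
  p.[0] != 0 -> exists2 r : R, 0 < r & forall s, `|s| < r -> p.[s] != 0.
Proof.
move=> p0_neq0.
set M : R := \sum_(i < size p) `|p`_i| + `|p.[0]| + 1.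
have coef_ge0 : 0 <= \sum_(i < size p) `|p`_i| by apply: sumr_ge0.
have M_gt0 : 0 < M by rewrite /M ltr_wpDl // addr_ge0.
have coef_leM : \sum_(i < size p) `|p`_i| <= M.
  by rewrite /M -addrA lerDl addr_ge0.
exists (`|p.[0]| / M); first by rewrite divr_gt0 // normr_gt0.
move=> s s_lt.
have s_le1 : `|s| <= 1.
  apply/ltW/(lt_le_trans s_lt).
  by rewrite ler_pdivrMr // mul1r /M -addrA addrCA lerDl addr_ge0.
have lipschitz : `|p.[s] - p.[0]| <= M * `|s|.
  have -> : p.[s] - p.[0] = \sum_(i < size p) p`_i * (s ^+ i - 0 ^+ i).
    by rewrite !horner_coef -sumrB; apply: eq_bigr => i _; rewrite mulrBr.
  apply: (le_trans (ler_norm_sum _ _ _)).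
  apply: (@le_trans _ _ (\sum_(i < size p) `|p`_i| * `|s|)).
    apply: ler_sum => i _; rewrite normrM; apply: ler_wpM2l => //.
    exact: pow_sub0_le.
  by rewrite -mulr_suml ler_wpM2r.
have small : M * `|s| < `|p.[0]| by rewrite mulrC -ltr_pdivlMr.
apply/eqP => ps0; move: lipschitz; rewrite ps0 sub0r normrN.
by move=> /le_lt_trans /(_ small); rewrite ltxx.
Qed.

Section DomainOpen.
Context {C : numClosedFieldType} {L K tau : nat}.
Context {beta : 'I_L -> 'I_L -> 'I_K -> C} {phi : pilots C L K tau}.
Variable W : pilots C L K tau.

(* Along the real line phi + tW, each D_l is a quadratic polynomial in t. *)
Definition Dlin l : 'M[C]_tau := \sum_(i < L) \sum_(j < K)
  beta l i j *: (phi i j *m herm (W i j) + W i j *m herm (phi i j)).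
Definition Dquad l : 'M[C]_tau := \sum_(i < L) \sum_(j < K)
  beta l i j *: (W i j *m herm (W i j)).

Lemma Dmat_padd (t : C) l : t \is Num.real ->
  Dmat beta (padd phi t W) l = Dmat beta phi l + t *: Dlin l + (t * t) *: Dquad l.
Proof.
move=> t_real.
rewrite /Dmat /Dlin /Dquad !scaler_sumr -!big_split; apply: eq_bigr => i _.
rewrite !scaler_sumr -!big_split; apply: eq_bigr => j _ /=.
rewrite /padd hermD hermZ (conj_Creal t_real) mulmxDl !mulmxDr.
rewrite -!scalemxAl -!scalemxAr !scalerDr !scalerA.
rewrite (mulrC t (beta l i j)) (mulrC (t * t) (beta l i j)) -!scalerA.
by rewrite -!addrA; congr (_ + _); rewrite addrC -!addrA.
Qed.

Definition Dpoly l : 'M[{poly C}]_tau :=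
  map_mx polyC (Dmat beta phi l) + 'X *: map_mx polyC (Dlin l)
  + 'X^2 *: map_mx polyC (Dquad l).

Lemma Dpoly_eval (t : C) l :
  map_mx (horner_eval t) (Dpoly l) =
  Dmat beta phi l + t *: Dlin l + (t * t) *: Dquad l.
Proof.
by apply/matrixP => a b; rewrite !mxE /= horner_evalE !hornerE expr2.
Qed.

(* The domain is open along real lines: prod_l det D_l(phi + tW) is a
   polynomial in t which is nonzero at t = 0. *)
Lemma in_domain_near : in_domain beta phi ->
  exists2 r : C, 0 < r & forall t, t \is Num.real -> `|t| < r ->
    in_domain beta (padd phi t W).
Proof.
move=> dom.
pose p := \prod_(l < L) \det (Dpoly l).
have p_eval t : p.[t] =
    \prod_(l < L) \det (Dmat beta phi l + t *: Dlin l + (t * t) *: Dquad l).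
  by rewrite /p horner_prod; apply: eq_bigr => l _; rewrite -Dpoly_eval det_map_mx.
have p0_neq0 : p.[0] != 0.
  rewrite p_eval; apply/prodf_neq0 => l _.
  by rewrite scale0r mul0r scale0r !addr0 -unitfE -unitmxE.
have [r r_gt0 hr] := @poly_nz_near0 C p p0_neq0.
exists r => // t t_real t_lt l.
rewrite unitmxE unitfE Dmat_padd //.
by move: (hr t t_lt); rewrite p_eval => /prodf_neq0 /(_ l isT).
Qed.

End DomainOpen.

Section ScaleInvariance.
Context {C : numClosedFieldType} {L K tau : nat}.
Context (alpha : 'I_L -> 'I_K -> C) {beta : 'I_L -> 'I_L -> 'I_K -> C}.

Lemma Dmat_scale (psi : pilots C L K tau) (c : C) l :
  Dmat beta (fun i j => c *: psi i j) l = (c * c^*) *: Dmat beta psi l.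
Proof.
rewrite /Dmat scaler_sumr; apply: eq_bigr => i _.
rewrite scaler_sumr; apply: eq_bigr => j _.
rewrite hermZ -scalemxAl -scalemxAr !scalerA.
by congr (_ *: _); rewrite [RHS]mulrC mulrA.
Qed.

Lemma gobj_scale {psi : pilots C L K tau} {c : C} :
  in_domain beta psi -> c != 0 ->
  gobj alpha beta (fun i j => c *: psi i j) = gobj alpha beta psi.
Proof.
move=> dom c_neq0.
have cc_neq0 : c * c^* != 0 by rewrite mulf_neq0 // conjC_eq0.
rewrite /gobj; apply: eq_bigr => l _; apply: eq_bigr => k _.
rewrite Dmat_scale invmxZ; last by rewrite unitmxZ ?unitfE ?cc_neq0 ?dom.
congr (_ * _).
rewrite hermZ -!scalemxAl -!scalemxAr -!scalemxAl !scalerA.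
have -> : c^* * (c / (c * c^*)) = 1 by rewrite mulrA (mulrC c^*) divff.
by rewrite scale1r.
Qed.

(* Hence rescaling a stationary point of g by c != 0 gives a stationary point:
   near t = 0, g(c phi + tV) = g(phi + t V/c). *)
Lemma stationary_scale (phi : pilots C L K tau) (c : C) :
  in_domain beta phi -> stationary (gobj alpha beta) phi -> c != 0 ->
  stationary (gobj alpha beta) (fun l k => c *: phi l k).
Proof.
move=> dom stat c_neq0 V.
pose W : pilots C L K tau := fun l k => c^-1 *: V l k.
have [r r_gt0 near_dom] := in_domain_near W dom.
apply: (hasderiv0_local r_gt0 _ (stat W)) => t t_real t_lt.
rewrite -(gobj_scale (near_dom t t_real t_lt) c_neq0); congr (gobj _ _ _).
apply: functional_extensionality => l; apply: functional_extensionality => k.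
by rewrite /padd /W scalerDr !scalerA mulrC mulrA mulVf // mul1r.
Qed.

End ScaleInvariance.

Lemma cV_neq0_dim {C : numClosedFieldType} {tau : nat} {v : 'cV[C]_tau} :
  v != 0 -> (0 < tau)%N.
Proof. by case: tau v => // v; rewrite flatmx0 eqxx. Qed.

Lemma sqnorm_gt0 (C : numClosedFieldType) tau (v : 'cV[C]_tau) :
  v != 0 -> 0 < sqnorm v.
Proof.
move=> v_neq0; rewrite lt0r sumr_ge0 ?andbT => [|i _]; last exact: exprn_ge0.
apply: contra v_neq0 => /eqP sum0; apply/eqP/matrixP => i j.
rewrite (ord1 j) mxE.
have := psumr_eq0P (fun i _ => exprn_ge0 2 (normr_ge0 (v i 0))) sum0 (i := i) isT.
by move/eqP; rewrite expf_eq0 /= normr_eq0 => /eqP.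
Qed.

Lemma sqnormZ (C : numClosedFieldType) tau (c : C) (v : 'cV[C]_tau) :
  sqnorm (c *: v) = `|c| ^+ 2 * sqnorm v.
Proof.
rewrite /sqnorm mulr_sumr; apply: eq_bigr => i _.
by rewrite mxE normrM exprMn.
Qed.

Lemma sqnormZ_le (C : numClosedFieldType) tau (x d : C) (v : 'cV[C]_tau) :
  0 <= d -> v != 0 -> d <= sqrtC x / vnorm v -> sqnorm (d *: v) <= x.
Proof.
move=> d_ge0 v_neq0 d_le.
have v_gt0 : 0 < vnorm v by rewrite sqrtC_gt0 sqnorm_gt0.
have dv_le : d * vnorm v <= sqrtC x by rewrite -ler_pdivlMr.
have dv_ge0 : 0 <= d * vnorm v by rewrite mulr_ge0 // ltW.
have : (d * vnorm v) ^+ 2 <= sqrtC x ^+ 2.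
  by rewrite ler_pXn2r // nnegrE (le_trans dv_ge0).
by rewrite exprMn /vnorm !sqrtCK sqnormZ ger0_norm.
Qed.

Theorem proposition3 (C : numClosedFieldType) (L K tau : nat) (Pmax : C)
  (alpha : 'I_L -> 'I_K -> C) (beta : 'I_L -> 'I_L -> 'I_K -> C)
  (phit : pilots C L K tau) (delta : C) :
  0 < Pmax ->
  (forall l i j, 0 < beta l i j) ->
  (forall l k, 0 < alpha l k) ->
  in_domain beta phit ->
  stationary (gobj alpha beta) phit ->
  (forall l k, phit l k != 0) ->
  (* delta = min_(l,k) sqrt(tau Pmax) / ||phit_lk|| *)
  (forall l k, delta <= sqrtC (tau%:R * Pmax) / vnorm (phit l k)) ->
  (exists l k, delta = sqrtC (tau%:R * Pmax) / vnorm (phit l k)) ->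
  let phistar := fun l k => delta *: phit l k in
  (forall l k, sqnorm (phistar l k) <= tau%:R * Pmax) /\
  KKT_point (gobj alpha beta) (tau%:R * Pmax) phistar.
Proof.
move=> Pmax_gt0 _ _ dom stat phit_neq0 delta_le [l0 [k0 delta_eq]] phistar.
have tau_gt0 : (0 < tau)%N := cV_neq0_dim (phit_neq0 l0 k0).
have delta_gt0 : 0 < delta.
  rewrite delta_eq divr_gt0 // ?sqrtC_gt0 ?sqnorm_gt0 //.
  by rewrite mulr_gt0 // ltr0n.
split=> [l k | ].
- exact: sqnormZ_le (ltW delta_gt0) (phit_neq0 l k) (delta_le l k).
- by apply/stationary_KKT/stationary_scale; rewrite // gt_eqF.
Qed.
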